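(* Let $n\ge 4$ and let $\mathcal X$ be a $5$-general set of $\mathrm{PG}(n,q)$. Then $$|\mathcal X|\le \frac{\sqrt{8q^n+q^2-6q+1}+3q-5}{2(q-1)}.$$
   Context: $q$ is a prime power. For integers $r,s$, an $(r,s)$-set of $\mathrm{PG}(n,q)$ is a set $\mathcal X$ of points such that: (i) every $s$-dimensional projective subspace contains at most $r$ points of $\mathcal X$; (ii) $\mathcal X$ spans $\mathrm{PG}(n,q)$; (iii) some $(s+1)$-dimensional projective subspace contains $r+2$ points of $\mathcal X$. A $k$-general set is a $(k-1,k-2)$-set; thus a $5$-general set is a $(4,3)$-set (every solid, i.e. $3$-dimensional projective subspace, contains at most $4$ of its points, so any $5$ of its points are in general position). *)

From HB Require Import structures.
From mathcomp Require Import all_boot all_order all_algebra all_field.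
Set Implicit Arguments. Unset Strict Implicit. Unset Printing Implicit Defensive.
Import Order.TTheory GRing.Theory Num.Theory.

(* PG(n,q) is modelled over a finite field F (so q = #|F| is a prime power):
   a point is the 1-dimensional row space <<v>> of a nonzero vector
   v : 'rV[F]_(n.+1); a projective s-dimensional subspace is a vector subspace
   (represented by a square matrix S, via its row space) with \rank S = s+1. *)

Definition pointset (F : finFieldType) (n : nat) (X : {set 'rV[F]_(n.+1)}) :=
  (forall x, x \in X -> x != 0%R) /\
  (forall x y, x \in X -> y \in X -> (x == y)%MS -> x = y).

Definition npts (F : finFieldType) (n : nat) (X : {set 'rV[F]_(n.+1)})
  (S : 'M[F]_(n.+1)) : nat := #|[set x in X | (x <= S)%MS]|.

Definition rs_set (F : finFieldType) (n r s : nat) (X : {set 'rV[F]_(n.+1)}) :=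
  [/\ pointset X,
      (forall S : 'M[F]_(n.+1), \rank S = s.+1 -> npts X S <= r),
      row_full (\sum_(x in X) <<x>>)%MS &
      (exists S : 'M[F]_(n.+1), \rank S = s.+2 /\ (r.+2 <= npts X S)%N)].

Definition k_general (F : finFieldType) (n k : nat) (X : {set 'rV[F]_(n.+1)}) :=
  rs_set k.-1 k.-2 X.

From HB Require Import structures.
From mathcomp Require Import all_boot all_order all_algebra all_field.
From mathcomp Require Import ring lra.
Import Order.TTheory GRing.Theory Num.Theory.
Set Implicit Arguments. Unset Strict Implicit. Unset Printing Implicit Defensive.

(* Fix P in X; let m = |X| - 1 and q = |F|. Any 5 points of X are linearly
   independent, since a dependence among them would put 5 points in a solid.
   Hence the vectors t P + sum_(x in S) c_x x, where S ranges over the sets of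
   at most two points of X \ {P} and every c_x is nonzero, are pairwise
   distinct: two of them differ by a combination of at most 5 points of X.
   Counting them gives the Hamming-type bound
     q (1 + m (q - 1) + C(m, 2) (q - 1)^2) <= q^(n+1),
   a quadratic inequality in |X| whose larger root is the stated bound. *)

Lemma exists_card_between (T : finType) (A B : {set T}) k :
  A \subset B -> (#|A| <= k <= #|B|)%N ->
  exists C : {set T}, [/\ A \subset C, C \subset B & #|C| = k].
Proof.
move=> sAB /andP[leAk lekB].
have : (0 < #|[set D : {set T} | D \subset B :\: A & #|D| == k - #|A|]|)%N.
  by rewrite cards_draws bin_gt0 cardsDS // leq_sub2r.
case/card_gt0P=> D; rewrite inE => /andP[/subsetDP[sDB disDA] /eqP cardD].
exists (A :|: D); split; first exact: subsetUl.
  by rewrite subUset sAB sDB.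
by rewrite cardsU disjoint_setI0 1?disjoint_sym // cards0 subn0 cardD subnKC.
Qed.

Section FfunSupport.

Variables (aT rT : finType) (y : rT).

Lemma card_ffun_support_eq (S : {set aT}) :
  #|[set g : {ffun aT -> rT} | [set x | g x != y] == S]| = #|rT|.-1 ^ #|S|.
Proof.
rewrite -(cardC1 y) -(card_pffun_on y S (predC1 y)); apply: eq_card => g.
rewrite inE; apply/eqP/familyP => [<- x | gS].
  by rewrite !inE; case: ifP => [|/negbFE] /=.
apply/setP => x; have := gS x; rewrite !inE.
by case: (x \in S); rewrite !inE ?eqxx // => /eqP->; rewrite eqxx.
Qed.

Lemma card_ffun_support_le (B : {set aT}) (k : nat) :
  #|[set g : {ffun aT -> rT} | [set x | g x != y] \subset B & #|[set x | g x != y]| <= k]|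
    = \sum_(i < k.+1) 'C(#|B|, i) * #|rT|.-1 ^ i.
Proof.
rewrite -sum1_card (partition_big (fun g : {ffun aT -> rT} => [set x | g x != y])
  (fun S => (S \subset B) && (#|S| <= k))) => [|g]; last by rewrite inE.
rewrite (partition_big (fun S : {set aT} => inord #|S| : 'I_k.+1) predT) //=.
apply: eq_bigr => i _; rewrite -cards_draws -sum1_card big_distrl /=.
apply: eq_big => [S | S /andP[/andP[sSB leSk] /eqP <-]].
  rewrite inE; case: (S \subset B) => //=.
  apply/andP/eqP => [[leSk /eqP <-] | eSi]; first by rewrite inordK.
  have leSk : #|S| <= k by rewrite eSi -ltnS ltn_ord.
  by split=> //; apply/eqP/val_inj; rewrite /= inordK.
rewrite mul1n inordK // -card_ffun_support_eq -sum1_card; apply: eq_bigl => g.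
by rewrite inE andb_idl // => /eqP eS; rewrite inE eS sSB.
Qed.

End FfunSupport.

Local Open Scope ring_scope.

Lemma exists_submx_rank (F : fieldType) (m N k : nat) (A : 'M[F]_(m, N)) :
  (\rank A <= k <= N)%N -> exists2 S : 'M[F]_N, (A <= S)%MS & \rank S = k.
Proof.
elim: k => [|k IHk] /andP[leAk lekN].
  exists 0; rewrite ?mxrank0 //.
  by move: leAk; rewrite leqn0 mxrank_eq0 => /eqP->; rewrite sub0mx.
have [eqAk | neqAk] := eqVneq (\rank A) k.+1.
  by exists <<A>>%MS; rewrite ?genmxE.
have [S sAS rankS] : exists2 S : 'M[F]_N, (A <= S)%MS & \rank S = k.
  by apply: IHk; rewrite -ltnS ltn_neqAle neqAk leAk ltnW.
have : ~~ row_full S by rewrite /row_full rankS neq_ltn lekN.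
rewrite -sub1mx => /row_subPn[i notSi].
set v := row i 1%:M in notSi.
exists (S + v)%MS; first exact: submx_trans sAS (addsmxSl S v).
apply/eqP; rewrite eqn_leq -rankS.
have ltS : (S < S + v)%MS.
  by rewrite ltmxE addsmxSl; apply: contra notSi; apply: submx_trans (addsmxSr S v).
rewrite (rank_ltmx ltS) andbT; apply: leq_trans (mxrank_adds_leqif S v).1 _.
by rewrite rank_rV -[leqRHS]addn1 leq_add2l leq_b1.
Qed.

Section FreeSets.

Variables (F : finFieldType) (n : nat).
Local Notation V := 'rV[F]_n.+1.

Definition free_set (T : {set V}) :=
  forall c : V -> F, \sum_(x in T) c x *: x = 0 -> {in T, forall x, c x = 0}.

Lemma free_setS (T1 T2 : {set V}) : T1 \subset T2 -> free_set T2 -> free_set T1.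
Proof.
move=> sT12 freeT2 c sum1 x xT1.
pose c2 y := if y \in T1 then c y else 0.
have sum2 : \sum_(y in T2) c2 y *: y = 0.
  rewrite (big_setID T1) /= (setIidPr sT12) [X in _ + X]big1 ?addr0.
    by rewrite -[RHS]sum1; apply: eq_bigr => y yT1; rewrite /c2 yT1.
  by move=> y; rewrite !inE /c2 => /andP[/negPf-> _]; rewrite scale0r.
by have := freeT2 c2 sum2 x (subsetP sT12 x xT1); rewrite /c2 xT1.
Qed.

Lemma dependent_set_submx_rank (T : {set V}) (c : V -> F) x0 k :
  x0 \in T -> c x0 != 0 -> \sum_(x in T) c x *: x = 0 ->
  (#|T| <= k.+1)%N -> (k <= n.+1)%N ->
  exists2 S : 'M[F]_n.+1, \rank S = k & {in T, forall x, (x <= S)%MS}.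
Proof.
move=> x0T cx0 sumT leTk lekn.
pose M := \matrix_(i < #|T|) (enum_val i : V).
pose u := \row_(i < #|T|) c (enum_val i).
have uM : u *m M = 0.
  rewrite mulmx_sum_row; apply: etrans sumT; rewrite (big_enum_val (fun x => c x *: x)).
  by apply: eq_bigr => i _; rewrite rowK mxE.
have not_free : ~~ row_free M.
  apply: contra cx0 => /row_free_inj injM; apply/eqP.
  have /injM u0 : u *m M = 0 *m M by rewrite uM mul0mx.
  have := congr1 (fun w : 'rV_#|T| => w 0 (enum_rank_in x0T x0)) u0.
  by rewrite !mxE enum_rankK_in.
have [S sMS rankS] : exists2 S : 'M[F]_n.+1, (M <= S)%MS & \rank S = k.
  apply: exists_submx_rank; rewrite lekn andbT -ltnS.
  by apply: leq_trans leTk; rewrite ltn_neqAle not_free rank_leq_row.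
exists S => // x xT.
rewrite -(enum_rankK_in xT xT) -(rowK (fun i => enum_val i : V)).
exact: submx_trans (row_sub _ _) sMS.
Qed.

Lemma free_subset_of_npts (X : {set V}) k :
  (k <= n.+1)%N -> (k < #|X|)%N ->
  (forall S : 'M[F]_n.+1, \rank S = k -> (npts X S <= k)%N) ->
  forall T : {set V}, T \subset X -> (#|T| <= k.+1)%N -> free_set T.
Proof.
move=> lekn ltkX nptsX T sTX leTk.
have [T' [sTT' sT'X cardT']] := exists_card_between sTX (introT andP (conj leTk ltkX)).
apply: free_setS sTT' _ => c sumT' x xT'; apply/eqP; apply: contraT => cx.
have [S rankS sT'S] := dependent_set_submx_rank xT' cx sumT' (eq_leq cardT') lekn.
suff : (#|T'| <= npts X S)%N.
  by rewrite cardT' => /leq_trans/(_ (nptsX S rankS)); rewrite ltnn.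
by apply/subset_leq_card/subsetP => y yT'; rewrite inE (subsetP sT'X) ?sT'S.
Qed.

Lemma hamming_bound_free (X : {set V}) (P : V) k :
  (forall T : {set V}, T \subset X -> (#|T| <= (k + k).+1)%N -> free_set T) ->
  P \in X ->
  (#|F| * \sum_(i < k.+1) 'C(#|X :\ P|, i) * #|F|.-1 ^ i <= #|F| ^ n.+1)%N.
Proof.
move=> freeX PX; rewrite -(card_ffun_support_le 0).
set G := [set g | _ & _].
pose phi (tg : F * {ffun V -> F}) := tg.1 *: P + \sum_x tg.2 x *: x.
suff phi_inj : {in setX [set: F] G &, injective phi}.
  have := max_card (phi @: setX [set: F] G).
  by rewrite card_in_imset // cardsX cardsT card_mx mul1n.
move=> [t g] [t' g']; rewrite !inE /= => /andP[sgXP leg] /andP[sg'XP leg'] eq_phi.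
set T := P |: ([set x | g x != 0] :|: [set x | g' x != 0]).
have sTX : T \subset X.
  by rewrite subUset sub1set PX subUset !(subset_trans _ (subsetDl X [set P])).
have leTk : (#|T| <= (k + k).+1)%N.
  rewrite cardsU1 -[(k + k).+1]add1n leq_add ?leq_b1 //.
  by apply: leq_trans (leq_card_setU _ _).1 _; apply: leq_add.
have gP : forall h : {ffun V -> F}, [set x | h x != 0] \subset X :\ P -> h P = 0.
  by move=> h /subsetP/(_ P); rewrite !inE eqxx /= => /contraNF/(_ isT)/negbFE/eqP.
pose c x := (if x == P then t - t' else 0) + (g x - g' x).
have c_out x : x \notin T -> c x = 0.
  rewrite /c !inE !negb_or => /and3P[/negPf-> /negPn/eqP-> /negPn/eqP->].
  by rewrite subrr addr0.
have sumc : \sum_(x in T) c x *: x = 0.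
  rewrite big_mkcond (eq_bigr (fun x => c x *: x)) => [|x _]; last first.
    by case: ifPn => // /c_out->; rewrite scale0r.
  under eq_bigr do rewrite scalerDl scalerBl.
  rewrite big_split sumrB /= (bigD1 P) //= eqxx big1 ?addr0 => [|x /negPf->]; last first.
    by rewrite scale0r.
  by rewrite scalerBl addrACA -opprD; apply/eqP; rewrite subr_eq0; apply/eqP.
have c0 x : c x = 0 by have [/(freeX _ sTX leTk c sumc)|/c_out] := boolP (x \in T).
have eq_t : t = t'.
  apply/eqP; rewrite -subr_eq0; have := c0 P.
  by rewrite /c eqxx (gP g) // (gP g') // subrr addr0 => ->.
congr pair => //; apply/ffunP => x; apply/eqP; rewrite -subr_eq0.
by have := c0 x; rewrite /c eq_t subrr if_same add0r => ->.
Qed.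

End FreeSets.

Lemma quadratic_le0_bound (R : rcfType) (a b c x : R) :
  0 < a -> a * x ^+ 2 + b * x + c <= 0 ->
  2 * a * x + b <= Num.sqrt (b ^+ 2 - 4 * a * c).
Proof.
move=> a_gt0 le0.
have sq : (2 * a * x + b) ^+ 2 <= b ^+ 2 - 4 * a * c by nra.
by apply: le_trans (ler_norm _) _; rewrite -sqrtr_sqr ler_wsqrtr.
Qed.

Lemma hamming_bound_sqrt (R : rcfType) (q m n : nat) : (1 < q)%N ->
  (q * \sum_(i < 3) 'C(m, i) * q.-1 ^ i <= q ^ n.+1)%N ->
  let Q : R := q%:R in
  m.+1%:R <= (Num.sqrt (8 * Q ^+ n + Q ^+ 2 - 6 * Q + 1) + 3 * Q - 5) / (2 * (Q - 1)).
Proof.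
move=> q_gt1 count /=; set Q : R := q%:R.
have {}count : (1 + m * q.-1 + 'C(m, 2) * q.-1 ^ 2 <= q ^ n)%N.
  move: count; rewrite expnS leq_pmul2l ?(ltnW q_gt1) //.
  by rewrite !big_ord_recr big_ord0 /= bin0 bin1 expn1 muln1 add0n.
move: count; rewrite -(ler_nat R) !natrD !natrM !natrX -subn1 natrB ?(ltnW q_gt1) // -/Q.
set M := m%:R; set C := 'C(m, 2)%:R; set U := Q - 1%:R => count.
have binE : 2 * C = M * (M - 1).
  rewrite /C /M; case: (m) => [|k]; first by rewrite bin0n mulr0 mul0r.
  by rewrite -natrM -mul_bin_diag bin1 natrM /= -natr1 addrK.
have U_gt0 : 0 < U by rewrite /U subr_gt0 ltr1n.
have key : 2 * U ^+ 2 * (M + 1) + (2 * U - 3 * U ^+ 2)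
    <= Num.sqrt (U ^+ 2 * (8 * Q ^+ n + Q ^+ 2 - 6 * Q + 1)).
  have -> : U ^+ 2 * (8 * Q ^+ n + Q ^+ 2 - 6 * Q + 1) = (2 * U - 3 * U ^+ 2) ^+ 2
      - 4 * U ^+ 2 * (2 - 2 * U + 2 * U ^+ 2 - 2 * Q ^+ n) by rewrite /U; ring.
  apply: quadratic_le0_bound; first exact: exprn_gt0.
  have -> : U ^+ 2 * (M + 1) ^+ 2 + (2 * U - 3 * U ^+ 2) * (M + 1)
      + (2 - 2 * U + 2 * U ^+ 2 - 2 * Q ^+ n)
      = 2 * (1 + M * U + C * (U * U) - Q ^+ n) + U ^+ 2 * (M * (M - 1) - 2 * C) by ring.
  by rewrite -binE subrr mulr0 addr0; lra.
rewrite sqrtrM ?sqr_ge0 // sqrtr_sqr (ger0_norm (ltW U_gt0)) in key.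
have QU : Q = U + 1 by rewrite /U subrK.
rewrite -natr1 -/M ler_pdivlMr ?pmulr_rgt0 // -(ler_pM2l U_gt0).
set s := Num.sqrt _ in key *; rewrite QU; lra.
Qed.

Theorem mainTheorem2 (R : rcfType) (F : finFieldType) (n : nat)
  (X : {set 'rV[F]_(n.+1)}) :
  (4 <= n)%N -> k_general 5 X ->
  let q : R := (#|F|)%:R in
  (#|X|)%:R <= (Num.sqrt (8 * q ^+ n + q ^+ 2 - 6 * q + 1) + 3 * q - 5)
               / (2 * (q - 1)).
Proof.
move=> n_ge4 [_ npts_solid _ [S [_ npts_S]]].
have X_ge6 : (6 <= #|X|)%N.
  by apply: leq_trans npts_S (subset_leq_card _); apply/subsetP => x; rewrite inE => /andP[].
have freeX : forall T : {set _}, T \subset X -> (#|T| <= 5)%N -> free_set T.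
  exact: free_subset_of_npts (leqW n_ge4) (ltnW X_ge6) npts_solid.
have [P PX] : exists P, P \in X by apply/card_gt0P; apply: leq_trans X_ge6.
rewrite (cardsD1 P X) PX add1n.
exact: hamming_bound_sqrt (card_finNzRing_gt1 F) (hamming_bound_free (k := 2) freeX PX).
Qed.
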